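(* For every rectangular permutation $\pi$ in the domain of the respective operator, $\psi_1(\pi)$, $\psi_2(\pi)$ and $\psi_u(\pi)$ have the same number of recoils as $\pi$, and $\psi_d(\pi)$ has exactly one more recoil than $\pi$.
   Context: A recoil of $\pi\in S_n$ is a value $i\in\{1,\dots,n-1\}$ with $\pi^{-1}_i>\pi^{-1}_{i+1}$ ($i+1$ occurs before $i$). A permutation is rectangular if it avoids $2413,2431,4213,4231$. For $\pi\in S_n$ (one-line form) and $1\le i,j\le n+1$, $\rho_{i,j}(\pi)\in S_{n+1}$ is obtained by increasing by $1$ every entry $\ge i$ and inserting the value $i$ at position $j$. Operators: $\psi_1=\rho_{1,1}$, domain all rectangular permutations (including the empty one); $\psi_2=\rho_{1,2}$, domain rectangular $\pi$ of size $\ge1$ with $\pi_1\ne1$; $\psi_u(\pi)=\rho_{\pi_1,1}(\pi)$, same domain as $\psi_2$; $\psi_d(\pi)=\rho_{\pi_1+1,1}(\pi)$, domain rectangular $\pi$ of size $\ge1$. *)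

From mathcomp Require Import all_boot.
Set Implicit Arguments. Unset Strict Implicit. Unset Printing Implicit Defensive.

Definition is_perm (s : seq nat) : bool := perm_eq s (iota 1 (size s)).

Definition contains (s p : seq nat) : Prop :=
  exists t : seq nat, [/\ subseq t s, size t = size p &
    forall a b, a < size t -> b < size t -> (nth 0 t a < nth 0 t b) = (nth 0 p a < nth 0 p b)].

Definition avoids (s p : seq nat) : Prop := ~ contains s p.

Definition rectangular (s : seq nat) : Prop :=
  [/\ is_perm s, avoids s [:: 2; 4; 1; 3], avoids s [:: 2; 4; 3; 1],
      avoids s [:: 4; 2; 1; 3] & avoids s [:: 4; 2; 3; 1]].

Definition is_recoil (s : seq nat) (i : nat) : bool := index i.+1 s < index i s.

Definition recoils (s : seq nat) : seq nat :=
  [seq i <- iota 1 (size s).-1 | is_recoil s i].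

Definition nrecoils (s : seq nat) : nat := size (recoils s).

(* rho_{i,j}: increase every entry >= i by 1, then insert value i at (1-based) position j *)
Definition rho (i j : nat) (s : seq nat) : seq nat :=
  let s' := [seq (if i <= x then x.+1 else x) | x <- s] in
  take j.-1 s' ++ i :: drop j.-1 s'.

Definition psi1 (s : seq nat) : seq nat := rho 1 1 s.
Definition psi2 (s : seq nat) : seq nat := rho 1 2 s.
Definition psiu (s : seq nat) : seq nat := rho (head 0 s) 1 s.
Definition psid (s : seq nat) : seq nat := rho (head 0 s).+1 1 s.

(** For a permutation [s] of [1..n] let [t := k.+1 :: map (bump k.+1) s].
    The bump maps [1..n] onto [1..n.+1] minus [k.+1], which heads [t] and so
    is not a recoil of [t]; every recoil of [s] is carried to a recoil of [t],
    and the image [bump k.+1 k = k] becomes a recoil of [t] because [k.+1] now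
    precedes it.  Hence [t] gains one recoil exactly when [0 < k] was not a
    recoil of [s].  [psi1] is the case [k = 0]; for [psiu] the head of [s] is
    [k.+1], so [k] already was a recoil; for [psid] the head of [s] is [k],
    which never is.  [psi2] swaps the first two entries [1] and [(head s).+1]
    of [psi1], which are not consecutive values, so no recoil changes. *)
From mathcomp Require Import all_boot zify.

Set Implicit Arguments.
Unset Strict Implicit.
Unset Printing Implicit Defensive.

Lemma mem_perm_bounds s : is_perm s -> {in s, forall x, 0 < x <= size s}.
Proof. by move/perm_mem=> eq_s x; rewrite eq_s mem_iota add1n. Qed.

Lemma is_recoil_notin s i : i.+1 \notin s -> ~~ is_recoil s i.
Proof. by move=> notin; rewrite /is_recoil memNindex // -leqNgt index_size. Qed.

Lemma is_recoil_head x r : ~~ is_recoil (x :: r) x.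
Proof. by rewrite /is_recoil /= eqxx. Qed.

Lemma is_recoil_pred_head k r : is_recoil (k.+1 :: r) k.
Proof. by rewrite /is_recoil /= eqxx eqn_leq ltnn. Qed.

Lemma is_recoil_swap a b w i : a.+1 != b -> b.+1 != a ->
  is_recoil [:: a, b & w] i = is_recoil [:: b, a & w] i.
Proof.
rewrite /is_recoil /=.
by case: (eqVneq a i.+1); case: (eqVneq b i.+1); case: (eqVneq a i);
  case: (eqVneq b i) => //; lia.
Qed.

Lemma count_recoils_iota s N : is_perm s -> (size s).-1 <= N ->
  count (is_recoil s) (iota 1 N) = nrecoils s.
Proof.
move=> perm_s leN; rewrite -(subnKC leN) iotaD count_cat.
have -> : count (is_recoil s) (iota (1 + (size s).-1) (N - (size s).-1)) = 0.
  apply/eqP; rewrite -leqn0 leqNgt -has_count; apply/hasPn => i.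
  rewrite mem_iota => /andP[le_i _]; apply: is_recoil_notin.
  by apply: contraL le_i => /(mem_perm_bounds perm_s); lia.
by rewrite addn0 /nrecoils /recoils size_filter.
Qed.

Lemma count_predU1 (T : eqType) (a : pred T) j l : uniq l ->
  count [predU1 j & a] l = count a l + ((j \in l) && ~~ a j).
Proof.
elim: l => //= x l IHl /andP[x_notin_l uniq_l]; rewrite IHl // inE.
case: (eqVneq x j) => [<- | _] /=; last by rewrite addnA.
by rewrite (negbTE x_notin_l) andFb addn0 addnAC; case: (a x).
Qed.

Lemma rhoE i j s :
  rho i j s = take j.-1 (map (bump i) s) ++ i :: drop j.-1 (map (bump i) s).
Proof.
rewrite /rho (_ : [seq _ | x <- s] = map (bump i) s) //.
by apply: eq_map => x; rewrite /bump; case: leqP.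
Qed.

Lemma rho1E k s : rho k 1 s = k :: map (bump k) s.
Proof. by rewrite rhoE take0 drop0. Qed.

Lemma index_bump_cons k s w :
  index (bump k w) (k :: map (bump k) s) = (index w s).+1.
Proof.
by rewrite /= (negbTE (neq_bump k w)) index_map //; apply: can_inj (bumpK k).
Qed.

Lemma is_recoil_bump_cons k s v :
  is_recoil (k.+1 :: map (bump k.+1) s) (bump k.+1 v) = (v == k) || is_recoil s v.
Proof.
case: (eqVneq v k) => [-> | ne_vk].
  by rewrite /bump ltnn add0n is_recoil_pred_head.
have bumpS_v : (bump k.+1 v).+1 = bump k.+1 v.+1 by rewrite /bump; lia.
by rewrite /is_recoil bumpS_v !index_bump_cons.
Qed.

Lemma map_bump_iota k m :
  map (bump k.+1) (iota 1 (k + m)) = iota 1 k ++ iota k.+2 m.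
Proof.
rewrite iotaD map_cat; congr cat.
  by rewrite -[RHS]map_id; apply/eq_in_map => x; rewrite mem_iota /bump; lia.
rewrite -[k.+2]/(1 + k.+1) [RHS]iotaDl.
by apply/eq_in_map => x; rewrite mem_iota /bump; lia.
Qed.

Lemma perm_iota_bump k n : k <= n ->
  perm_eq (k.+1 :: map (bump k.+1) (iota 1 n)) (iota 1 n.+1).
Proof.
move=> le_kn; rewrite -(subnKC le_kn) map_bump_iota -addnS iotaD /=.
by rewrite perm_sym -cat1s perm_catCA.
Qed.

Lemma nrecoils_rho1 k s : is_perm s -> k <= size s ->
  nrecoils (rho k.+1 1 s) = nrecoils s + ((0 < k) && ~~ is_recoil s k).
Proof.
move=> perm_s le_k; rewrite rho1E.
have perm_iota := perm_iota_bump le_k.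
have perm_t : is_perm (k.+1 :: map (bump k.+1) s).
  by rewrite /is_perm /= size_map (perm_trans _ perm_iota) // perm_cons perm_map.
rewrite -(count_recoils_iota (N := (size s).+1) perm_t); last by rewrite /= size_map.
rewrite -(permP perm_iota) /= (negbTE (is_recoil_head _ _)) add0n count_map.
rewrite (eq_count (is_recoil_bump_cons k s)) count_predU1 ?iota_uniq //.
by rewrite count_recoils_iota ?leq_pred // mem_iota add1n ltnS le_k andbT.
Qed.

Lemma nrecoils_psi1 s : is_perm s -> nrecoils (psi1 s) = nrecoils s.
Proof. by move=> perm_s; rewrite /psi1 (nrecoils_rho1 (k := 0)) ?addn0. Qed.

Lemma nrecoils_psi2 x r : is_perm (x :: r) -> x != 1 ->
  nrecoils (psi2 (x :: r)) = nrecoils (x :: r).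
Proof.
move=> perm_s ne_x1; rewrite -[RHS]nrecoils_psi1 //.
have /andP[x_gt0 _] := mem_perm_bounds perm_s (mem_head x r).
have -> : psi1 (x :: r) = [:: 1, x.+1 & map (bump 1) r].
  by rewrite /psi1 rho1E /= {1}/bump x_gt0.
have -> : psi2 (x :: r) = [:: x.+1, 1 & map (bump 1) r].
  by rewrite /psi2 rhoE /= take0 drop0 {1}/bump x_gt0.
rewrite /nrecoils /recoils; congr (size _); apply: eq_filter => i.
by apply: is_recoil_swap; lia.
Qed.

Lemma nrecoils_psiu x r : is_perm (x :: r) ->
  nrecoils (psiu (x :: r)) = nrecoils (x :: r).
Proof.
move=> perm_s; have /andP[x_gt0 x_le] := mem_perm_bounds perm_s (mem_head x r).
case: x x_gt0 x_le perm_s => // k _ lt_k perm_s.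
by rewrite /psiu /= nrecoils_rho1 ?is_recoil_pred_head ?andbF ?addn0 // ltnW.
Qed.

Lemma nrecoils_psid x r : is_perm (x :: r) ->
  nrecoils (psid (x :: r)) = (nrecoils (x :: r)).+1.
Proof.
move=> perm_s; have /andP[x_gt0 x_le] := mem_perm_bounds perm_s (mem_head x r).
by rewrite /psid /= nrecoils_rho1 // x_gt0 is_recoil_head addn1.
Qed.

Theorem lemma4p4 :
  (forall s : seq nat, rectangular s -> nrecoils (psi1 s) = nrecoils s) /\
  (forall s : seq nat, rectangular s -> 1 <= size s -> head 0 s != 1 ->
     nrecoils (psi2 s) = nrecoils s) /\
  (forall s : seq nat, rectangular s -> 1 <= size s -> head 0 s != 1 ->
     nrecoils (psiu s) = nrecoils s) /\
  (forall s : seq nat, rectangular s -> 1 <= size s ->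
     nrecoils (psid s) = (nrecoils s).+1).
Proof.
split; first by move=> s [perm_s _ _ _ _]; apply: nrecoils_psi1.
split; first by move=> [|x r] // [perm_s _ _ _ _] _; apply: nrecoils_psi2.
split; first by move=> [|x r] // [perm_s _ _ _ _] _ _; apply: nrecoils_psiu.
by move=> [|x r] // [perm_s _ _ _ _] _; apply: nrecoils_psid.
Qed.
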